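(* Let $\lambda_0,\lambda_1,c_1\ge0$. For $E\in\mathbb{R}$ let $$A_1(E)=\begin{bmatrix}E&-1\\1&0\end{bmatrix}\begin{bmatrix}E-c_1&-1\\1&0\end{bmatrix},\quad A_2(E)=\begin{bmatrix}E&-1\\1&0\end{bmatrix}\begin{bmatrix}E-\lambda_1-c_1&-1\\1&0\end{bmatrix},$$ $$A_3(E)=\begin{bmatrix}E-\lambda_0&-1\\1&0\end{bmatrix}\begin{bmatrix}E-c_1&-1\\1&0\end{bmatrix},\quad A_4(E)=\begin{bmatrix}E-\lambda_0&-1\\1&0\end{bmatrix}\begin{bmatrix}E-\lambda_1-c_1&-1\\1&0\end{bmatrix}.$$ Then the set $\{E\in\mathbb{R}: A_i(E)\text{ is hyperbolic for every } i=1,2,3,4\}=\bigcap_{i=1}^4\{E:|\operatorname{tr}A_i(E)|>2\}$ is a union of at most $5$ intervals.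
   Context: A matrix in $SL(2,\mathbb{R})$ is hyperbolic if the absolute value of its trace is greater than $2$. *)

From HB Require Import structures.
From mathcomp Require Import all_boot all_order all_algebra.
From mathcomp Require Import reals.
Set Implicit Arguments. Unset Strict Implicit. Unset Printing Implicit Defensive.
Import Order.TTheory GRing.Theory Num.Theory.
Local Open Scope ring_scope.

Definition tmat (R : realType) (x : R) : 'M[R]_2 :=
  \matrix_(i < 2, j < 2)
    (if i == 0 :> 'I_2 then (if j == 0 :> 'I_2 then x else -1)
     else (if j == 0 :> 'I_2 then 1 else 0)).

Definition hyperbolic (R : realType) (A : 'M[R]_2) : Prop := 2 < `|\tr A|.

Definition A1 (R : realType) (l0 l1 c1 E : R) : 'M[R]_2 := tmat E *m tmat (E - c1).
Definition A2 (R : realType) (l0 l1 c1 E : R) : 'M[R]_2 := tmat E *m tmat (E - l1 - c1).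
Definition A3 (R : realType) (l0 l1 c1 E : R) : 'M[R]_2 := tmat (E - l0) *m tmat (E - c1).
Definition A4 (R : realType) (l0 l1 c1 E : R) : 'M[R]_2 := tmat (E - l0) *m tmat (E - l1 - c1).

From HB Require Import structures.
From mathcomp Require Import all_boot all_order all_algebra.
From mathcomp Require Import reals.
From mathcomp Require Import ring lra.
Import Order.TTheory GRing.Theory Num.Theory.
Local Open Scope ring_scope.

(* Since tr (T(a) T(b)) = a b - 2 for T(x) = [[x, -1], [1, 0]], the product
   T(E - x) T(E - y) is hyperbolic iff (E - x)(E - y) < 0 or (E - x)(E - y) > 4,
   i.e. iff E lies strictly between x and y or outside the two roots of
   (E - x)(E - y) = 4.  These roots increase with x and y, and the four pairs
   (x, y) of the theorem are ordered coordinatewise, so intersecting the four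
   regions is a finite case analysis on the order of the endpoints. *)

Section HyperbolicRegion.
Context {R : realType}.
Implicit Types x y E : R.

Definition disc x y : R := Num.sqrt ((x - y) ^+ 2 + 16).

(* The two roots of (E - x)(E - y) = 4. *)
Definition root_lo x y : R := (x + y - disc x y) / 2.
Definition root_hi x y : R := (x + y + disc x y) / 2.

Definition hyp_region x y E : Prop :=
  (x < E /\ E < y) \/ (y < E /\ E < x) \/ E < root_lo x y \/ root_hi x y < E.

Lemma sqr_disc x y : disc x y ^+ 2 = (x - y) ^+ 2 + 16.
Proof. by rewrite sqr_sqrtr // addr_ge0 // sqr_ge0. Qed.

Lemma disc_gt_dist x y : x - y < disc x y /\ y - x < disc x y.
Proof.
have disc_ge0 : 0 <= disc x y by exact: sqrtr_ge0.
have := sqr_disc x y; rewrite !expr2 => sqr_eq; split; nra.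
Qed.

Lemma root_bounds x y :
  [/\ root_lo x y < x, root_lo x y < y, x < root_hi x y & y < root_hi x y].
Proof. have [? ?] := disc_gt_dist x y; rewrite /root_lo /root_hi; split; lra. Qed.

Lemma root_lo_eq x y : (root_lo x y - x) * (root_lo x y - y) = 4.
Proof.
rewrite /root_lo; have -> : forall s, ((x + y - s) / 2 - x) * ((x + y - s) / 2 - y)
  = (s ^+ 2 - (x - y) ^+ 2) / 4 by move=> s; field.
by rewrite sqr_disc; field.
Qed.

Lemma root_hi_eq x y : (root_hi x y - x) * (root_hi x y - y) = 4.
Proof.
rewrite /root_hi; have -> : forall s, ((x + y + s) / 2 - x) * ((x + y + s) / 2 - y)
  = (s ^+ 2 - (x - y) ^+ 2) / 4 by move=> s; field.
by rewrite sqr_disc; field.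
Qed.

Lemma prod_gt4P x y E :
  4 < (E - x) * (E - y) <-> E < root_lo x y \/ root_hi x y < E.
Proof.
have := sqr_disc x y; rewrite expr2 => sqr_eq.
have [? ?] := disc_gt_dist x y.
rewrite /root_lo /root_hi; split=> [|[|]] ?; nra.
Qed.

Lemma prod_lt0P x y E :
  (E - x) * (E - y) < 0 <-> (x < E /\ E < y) \/ (y < E /\ E < x).
Proof.
split=> [|[[? ?]|[? ?]]]; [|nra|nra].
rewrite mulr_lt0 !subr_lt0 !subr_eq0 => /and3P[/eqP ? /eqP ?].
by case: (ltgtP E x); case: (ltgtP E y) => //= *; lra.
Qed.

(* If the roots moved the wrong way, at the root of one pair the product for the
   other pair would be both > 4 and <= 4. *)
Lemma root_lo_le {x y x' y' : R} : x <= x' -> y <= y' -> root_lo x y <= root_lo x' y'.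
Proof.
move=> le_x le_y; have [? ? _ _] := root_bounds x y.
have := root_lo_eq x' y'; set r := root_lo x' y' => r_eq.
rewrite leNgt; apply/negP => lt_r.
have : 4 < (r - x) * (r - y) by apply/prod_gt4P; left.
nra.
Qed.

Lemma root_hi_le {x y x' y' : R} : x <= x' -> y <= y' -> root_hi x y <= root_hi x' y'.
Proof.
move=> le_x le_y; have [_ _ ? ?] := root_bounds x' y'.
have := root_hi_eq x y; set r := root_hi x y => r_eq.
rewrite leNgt; apply/negP => lt_r.
have : 4 < (r - x') * (r - y') by apply/prod_gt4P; right.
nra.
Qed.

Lemma tr_tmat_mul (a b : R) : \tr (tmat a *m tmat b) = a * b - 2.
Proof.
rewrite /mxtrace !big_ord_recr big_ord0 /= !mxE !big_ord_recr big_ord0 /= !mxE /=.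
by rewrite big_ord0; lra.
Qed.

Lemma hyperbolic_tmat_mulE x y E :
  hyperbolic (tmat (E - x) *m tmat (E - y)) <-> hyp_region x y E.
Proof.
rewrite /hyperbolic tr_tmat_mul ltr_normr /hyp_region.
have := prod_gt4P x y E; have := prod_lt0P x y E.
set p := (E - x) * (E - y) => lt0P gt4P.
split=> [/orP[|] lt_p | region].
- have /gt4P : 4 < p by lra.
  by tauto.
- have /lt0P : p < 0 by lra.
  by tauto.
- by apply/orP; case: (ltP p 0) => ?; [right; lra | left; lra].
Qed.

Lemma hyp_region4_intervals {x0 x1 y0 y1 : R} :
  x0 <= x1 -> x0 <= y0 -> y0 <= y1 ->
  exists s : seq (interval R), (size s <= 5)%N /\
    forall E, (hyp_region x0 y0 E /\ hyp_region x0 y1 E /\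
               hyp_region x1 y0 E /\ hyp_region x1 y1 E)
              <-> has (fun I : interval R => E \in I) s.
Proof.
move=> le_x le_xy le_y.
have [? ? ? ?] := root_bounds x0 y0; have [? ? ? ?] := root_bounds x0 y1.
have [? ? ? ?] := root_bounds x1 y0; have [? ? ? ?] := root_bounds x1 y1.
have := root_lo_le (lexx x0) le_y; have := root_lo_le le_x (lexx y0).
have := root_lo_le (lexx x1) le_y; have := root_lo_le le_x (lexx y1).
have := root_hi_le (lexx x0) le_y; have := root_hi_le le_x (lexx y0).
have := root_hi_le (lexx x1) le_y; have := root_hi_le le_x (lexx y1).
move=> *.
set lo := `]-oo, root_lo x0 y0[; set hi := `]root_hi x1 y1, +oo[.
set mid0 := `]x0, root_lo x1 y0[; set mid1 := `]root_hi x1 y0, y1[.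
case: (ltP x1 y0) => [lt_x1y0 | le_y0x1].
  exists [:: lo; hi; mid0; mid1; `]x1, y0[]; split=> // E.
  by rewrite /hyp_region /= !in_itv /=; lra.
case: (ltP x1 y1) => [lt_x1y1 | le_y1x1].
  exists [:: lo; hi; mid0; mid1; `]root_hi x0 y0, root_lo x1 y1[]; split=> // E.
  by rewrite /hyp_region /= !in_itv /=; lra.
exists [:: lo; hi; mid0; `]root_hi x0 y0, root_lo x1 y1[; `]root_hi x0 y1, x1[];
  split=> // E.
by rewrite /hyp_region /= !in_itv /=; lra.
Qed.

End HyperbolicRegion.

Theorem proposition1 (R : realType) (l0 l1 c1 : R) :
  0 <= l0 -> 0 <= l1 -> 0 <= c1 ->
  exists s : seq (interval R),
    (size s <= 5)%N /\
    forall E : R,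
      (hyperbolic (A1 l0 l1 c1 E) /\ hyperbolic (A2 l0 l1 c1 E) /\
       hyperbolic (A3 l0 l1 c1 E) /\ hyperbolic (A4 l0 l1 c1 E))
      <-> has (fun I : interval R => E \in I) s.
Proof.
move=> l0_ge0 l1_ge0 c1_ge0.
have le_c1 : c1 <= l1 + c1 by lra.
have [s [size_s sP]] := hyp_region4_intervals l0_ge0 c1_ge0 le_c1.
exists s; split=> // E.
by rewrite -sP -!hyperbolic_tmat_mulE subr0 opprD addrA.
Qed.
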